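(* Let $(X,d)$ be a complete separable metric space and let $f\colon X\to X$ be a continuous map. If $\operatorname{diam}(X)=\sup_{x,y\in X}d(x,y)=\infty$ and $f$ is weakly mixing, then $f$ is densely uniformly Li-Yorke chaotic.
   Context: $f$ is weakly mixing if $f\times f\colon X\times X\to X\times X$ is transitive, i.e. for all nonempty open $U,V\subset X\times X$ there is $n\in\mathbb{N}$ with $U\cap (f\times f)^{-n}(V)\neq\emptyset$. A subset $S\subset X$ with at least two points is uniformly Li-Yorke scrambled for $f$ if there exist sequences $\{p_n\}$, $\{q_n\}$ in $\mathbb{N}$ such that for all distinct $x,y\in S$: $\lim_{n} d(f^{p_n}(x),f^{p_n}(y))=0$ and $\lim_{n} d(f^{q_n}(x),f^{q_n}(y))=\infty$. $f$ is densely uniformly Li-Yorke chaotic if there exists a dense, uncountable, uniformly Li-Yorke scrambled subset of $X$. *)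

From Stdlib Require Import Reals.
Open Scope R_scope.

Definition is_metric {T : Type} (d : T -> T -> R) : Prop :=
  (forall x y, 0 <= d x y) /\
  (forall x y, d x y = 0 <-> x = y) /\
  (forall x y, d x y = d y x) /\
  (forall x y z, d x z <= d x y + d y z).

Definition cauchy_seq {T : Type} (d : T -> T -> R) (u : nat -> T) : Prop :=
  forall eps, 0 < eps -> exists N, forall m n, (N <= m)%nat -> (N <= n)%nat ->
    d (u m) (u n) < eps.

Definition converges_to {T : Type} (d : T -> T -> R) (u : nat -> T) (l : T) : Prop :=
  forall eps, 0 < eps -> exists N, forall n, (N <= n)%nat -> d (u n) l < eps.

Definition complete_metric {T : Type} (d : T -> T -> R) : Prop :=
  forall u : nat -> T, cauchy_seq d u -> exists l, converges_to d u l.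

(* countability of a subset: enumerated (with possible gaps) by nat *)
Definition countable_set {T : Type} (S : T -> Prop) : Prop :=
  exists e : nat -> option T, forall x, S x -> exists n, e n = Some x.

Definition dense_set {T : Type} (d : T -> T -> R) (S : T -> Prop) : Prop :=
  forall x eps, 0 < eps -> exists s, S s /\ d x s < eps.

Definition separable_metric {T : Type} (d : T -> T -> R) : Prop :=
  exists S : T -> Prop, countable_set S /\ dense_set d S.

Definition metric_continuous {T : Type} (d : T -> T -> R) (f : T -> T) : Prop :=
  forall x eps, 0 < eps -> exists delta, 0 < delta /\
    forall y, d x y < delta -> d (f x) (f y) < eps.

Definition infinite_diameter {T : Type} (d : T -> T -> R) : Prop :=
  forall M : R, exists x y, M < d x y.

(* open subsets of X x X for the product topology (generated by the metric
   max(d(x1,y1), d(x2,y2))) *)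
Definition open2 {T : Type} (d : T -> T -> R) (U : T * T -> Prop) : Prop :=
  forall p, U p -> exists eps, 0 < eps /\
    forall q, d (fst p) (fst q) < eps -> d (snd p) (snd q) < eps -> U q.

Definition prod_map {T : Type} (f : T -> T) (p : T * T) : T * T :=
  (f (fst p), f (snd p)).

(* topological transitivity on X x X, with n ranging over N = {1,2,...} *)
Definition weakly_mixing {T : Type} (d : T -> T -> R) (f : T -> T) : Prop :=
  forall U V : T * T -> Prop,
    open2 d U -> open2 d V -> (exists p, U p) -> (exists p, V p) ->
    exists n : nat, (1 <= n)%nat /\
      exists p, U p /\ V (Nat.iter n (prod_map f) p).

Definition uniformly_LY_scrambled {T : Type} (d : T -> T -> R) (f : T -> T)
    (S : T -> Prop) : Prop :=
  (exists x y, S x /\ S y /\ x <> y) /\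
  exists p q : nat -> nat,
    forall x y, S x -> S y -> x <> y ->
      (forall eps, 0 < eps -> exists N, forall n, (N <= n)%nat ->
          d (Nat.iter (p n) f x) (Nat.iter (p n) f y) < eps) /\
      (forall M, exists N, forall n, (N <= n)%nat ->
          M < d (Nat.iter (q n) f x) (Nat.iter (q n) f y)).

Definition densely_uniformly_LY_chaotic {T : Type} (d : T -> T -> R)
    (f : T -> T) : Prop :=
  exists S : T -> Prop,
    dense_set d S /\ ~ countable_set S /\ uniformly_LY_scrambled d f S.

From Stdlib Require Import Reals Lra Lia Cantor ClassicalEpsilon.
Open Scope R_scope.

(* Build a Cantor scheme of balls. Stage n+1 consists of two small children, nested with
   room to spare, of every ball of stage n, plus one ball inside the n-th ball of a countable
   base. Weak mixing, applied to finitely many pairs of open sets at once, gives a time p_n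
   at which f^p_n maps all balls of stage n+1 into one ball of radius 1/(2(n+1)), and a time
   q_n at which f^q_n sends distinct balls into neighbourhoods of points more than n+2
   apart; such points exist because the diameter is infinite. By completeness every branch
   of the scheme contains a point; the points lying eventually in a ball of every stage form
   a dense set, uncountable by a diagonal argument along branches, which is uniformly
   Li-Yorke scrambled along (p_n) and (q_n). *)

Record ball (T : Type) : Type := Ball { center : T; radius : R }.
Arguments Ball {T}.
Arguments center {T}.
Arguments radius {T}.

Definition in_ball {T : Type} (d : T -> T -> R) (B : ball T) (y : T) : Prop :=
  d (center B) y < radius B.

Definition ball_within {T : Type} (d : T -> T -> R) (B A : ball T) : Prop :=
  d (center A) (center B) + radius B < radius A.

Definition open_set {T : Type} (d : T -> T -> R) (U : T -> Prop) : Prop :=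
  forall x, U x -> exists eps, 0 < eps /\ forall y, d x y < eps -> U y.

Definition nonempty_open {T : Type} (d : T -> T -> R) (U : T -> Prop) : Prop :=
  open_set d U /\ exists x, U x.

Lemma inv_INR_succ_pos n : 0 < / (INR n + 1).
Proof. apply Rinv_0_lt_compat. pose proof (pos_INR n). lra. Qed.

Lemma inv_INR_succ_lt_eventually (eps : R) :
  0 < eps -> exists N, forall n, (N <= n)%nat -> / (INR n + 1) < eps.
Proof.
  intros Heps. destruct (archimed_cor1 eps Heps) as [N [HN HN0]].
  exists N. intros n Hn. apply le_INR in Hn.
  assert (0 < INR N) by (apply lt_0_INR; lia).
  apply Rlt_trans with (/ INR N); [apply Rinv_lt_contravar; nra | exact HN].
Qed.

Lemma metric_continuous_iter {T : Type} (d : T -> T -> R) (g : T -> T) (n : nat) :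
  metric_continuous d g -> metric_continuous d (Nat.iter n g).
Proof.
  intros Hg. induction n as [|n IH]; intros x eps Heps.
  - exists eps. split; [exact Heps | intros y Hy; exact Hy].
  - destruct (Hg (Nat.iter n g x) eps Heps) as [delta1 [Hdelta1 H1]].
    destruct (IH x delta1 Hdelta1) as [delta2 [Hdelta2 H2]].
    exists delta2. split; [exact Hdelta2 | intros y Hy; apply H1, H2, Hy].
Qed.

Lemma open_set_preimage {T : Type} (d : T -> T -> R) (g : T -> T) (U : T -> Prop) :
  metric_continuous d g -> open_set d U -> open_set d (fun y => U (g y)).
Proof.
  intros Hg HU x Ux. destruct (HU _ Ux) as [eps [Heps H]].
  destruct (Hg x eps Heps) as [delta [Hdelta Hg']].
  exists delta. split; [exact Hdelta | intros y Hy; apply H, Hg', Hy].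
Qed.

Lemma open_setI {T : Type} (d : T -> T -> R) (U V : T -> Prop) :
  open_set d U -> open_set d V -> open_set d (fun y => U y /\ V y).
Proof.
  intros HU HV x [Ux Vx].
  destruct (HU x Ux) as [e1 [He1 H1]]. destruct (HV x Vx) as [e2 [He2 H2]].
  exists (Rmin e1 e2). split; [apply Rmin_glb_lt; assumption |].
  intros y Hy. pose proof (Rmin_l e1 e2). pose proof (Rmin_r e1 e2).
  split; [apply H1 | apply H2]; lra.
Qed.

Lemma small_ball_within {T : Type} (d : T -> T -> R) (U : T -> Prop) (A : ball T) (x : T)
    (eps : R) :
  open_set d U -> U x -> in_ball d A x -> 0 < eps ->
  exists r, 0 < r < eps /\ ball_within d (Ball x r) A /\
    forall y, in_ball d (Ball x r) y -> U y.
Proof.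
  intros HU Ux Ax Heps. destruct (HU x Ux) as [e [He HUe]].
  set (s := radius A - d (center A) x).
  assert (Hs : 0 < s) by (unfold in_ball in Ax; unfold s; lra).
  set (r := Rmin e (Rmin (s / 2) (eps / 2))).
  assert (Hr_e : r <= e) by apply Rmin_l.
  assert (Hr_s : r <= s / 2) by (eapply Rle_trans; [apply Rmin_r | apply Rmin_l]).
  assert (Hr_eps : r <= eps / 2) by (eapply Rle_trans; [apply Rmin_r | apply Rmin_r]).
  assert (Hr : 0 < r) by (repeat apply Rmin_glb_lt; lra).
  exists r. unfold ball_within, in_ball, s in *; simpl.
  split; [lra | split; [lra |]].
  intros y Hy. apply HUe. lra.
Qed.

Lemma small_balls_within {T : Type} (d : T -> T -> R) (M : nat) (A : nat -> ball T)
    (U : nat -> T -> Prop) (eps : R) :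
  0 < eps ->
  (forall k, (k < M)%nat -> open_set d (U k) /\ exists x, U k x /\ in_ball d (A k) x) ->
  exists C : nat -> ball T, forall k, (k < M)%nat ->
    0 < radius (C k) < eps /\ ball_within d (C k) (A k) /\ forall y, in_ball d (C k) y -> U k y.
Proof.
  intros Heps HU.
  apply (choice (fun k B => (k < M)%nat -> 0 < radius B < eps /\ ball_within d B (A k) /\
    forall y, in_ball d B y -> U k y)).
  intros k. destruct (Nat.lt_ge_cases k M) as [Hk | Hk]; [| exists (A k); lia].
  destruct (HU k Hk) as [HUk [x [Ux Ax]]].
  destruct (small_ball_within d (U k) (A k) x eps HUk Ux Ax Heps) as [r Hr].
  exists (Ball x r). intros _. exact Hr.
Qed.

Section MetricSpace.
Context {T : Type} (d : T -> T -> R) (Hm : is_metric d).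

Lemma dist_ge0 x y : 0 <= d x y.
Proof. apply Hm. Qed.

Lemma dist_eq0 x y : d x y = 0 <-> x = y.
Proof. apply Hm. Qed.

Lemma dist_sym x y : d x y = d y x.
Proof. apply Hm. Qed.

Lemma dist_triangle x y z : d x z <= d x y + d y z.
Proof. apply Hm. Qed.

Lemma dist_refl x : d x x = 0.
Proof. apply dist_eq0. reflexivity. Qed.

Lemma dist_gt0 x y : x <> y -> 0 < d x y.
Proof.
  intros Hxy. destruct (Rle_lt_or_eq_dec 0 (d x y) (dist_ge0 x y)) as [H | H]; [exact H |].
  exfalso. apply Hxy, dist_eq0. symmetry. exact H.
Qed.

Lemma dist_lt_via x y z e e' : d z x < e -> d z y < e' -> d x y < e + e'.
Proof.
  intros Hx Hy. pose proof (dist_triangle x z y) as Htri. rewrite (dist_sym x z) in Htri. lra.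
Qed.

Lemma dist_lt_perturb x y u v e e' : d u x < e -> d v y < e' -> d u v < d x y + e + e'.
Proof.
  intros Hx Hy. pose proof (dist_triangle u x v). pose proof (dist_triangle x y v) as Htri.
  rewrite (dist_sym y v) in Htri. lra.
Qed.

Lemma in_ball_center B : 0 < radius B -> in_ball d B (center B).
Proof. unfold in_ball. rewrite dist_refl. auto. Qed.

Lemma in_ball_open B : open_set d (in_ball d B).
Proof.
  intros x Hx. exists (radius B - d (center B) x). split; [unfold in_ball in Hx; lra |].
  intros y Hy. unfold in_ball. pose proof (dist_triangle (center B) x y). lra.
Qed.

Lemma in_ball_nonempty_open B : 0 < radius B -> nonempty_open d (in_ball d B).
Proof. split; [apply in_ball_open | exists (center B); apply in_ball_center; assumption]. Qed.

Lemma in_ball_within B A y : ball_within d B A -> in_ball d B y -> in_ball d A y.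
Proof.
  unfold ball_within, in_ball. intros HBA Hy.
  pose proof (dist_triangle (center A) (center B) y). lra.
Qed.

Lemma far_point (o : T) (L : R) : infinite_diameter d -> exists x, L < d o x.
Proof.
  intros Hd. destruct (Hd (2 * L)) as [x [y Hxy]].
  pose proof (dist_triangle x o y) as Htri. rewrite (dist_sym x o) in Htri.
  destruct (Rlt_dec L (d o x)); [exists x | exists y]; lra.
Qed.

Lemma far_points (L : R) (M : nat) : infinite_diameter d ->
  exists w : nat -> T, forall i j, (i < M)%nat -> (j < M)%nat -> i <> j -> L < d (w i) (w j).
Proof.
  intros Hd. destruct (Hd 0) as [o _].
  enough (exists (w : nat -> T) (Bw : R), (forall i, (i < M)%nat -> d o (w i) <= Bw) /\
     forall i j, (i < M)%nat -> (j < M)%nat -> i <> j -> L < d (w i) (w j)) as [w [_ [_ Hw]]]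
    by (exists w; exact Hw).
  induction M as [|M [w [Bw [HBw Hw]]]].
  - exists (fun _ => o), 0. split; intros; lia.
  - destruct (far_point o (Bw + L) Hd) as [x Hx].
    assert (Hfar : forall i, (i < M)%nat -> L < d (w i) x).
    { intros i Hi. pose proof (HBw i Hi). pose proof (dist_triangle o (w i) x). lra. }
    exists (fun i => if Nat.eqb i M then x else w i), (Rmax Bw (d o x)). split.
    + intros i Hi. destruct (Nat.eqb_spec i M); [apply Rmax_r |].
      eapply Rle_trans; [apply HBw; lia | apply Rmax_l].
    + intros i j Hi Hj Hij.
      destruct (Nat.eqb_spec i M), (Nat.eqb_spec j M); try lia.
      * rewrite dist_sym. apply Hfar. lia.
      * apply Hfar. lia.
      * apply Hw; lia.
Qed.

Lemma nested_balls_center_dist (B : nat -> ball T) j m :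
  (forall j, ball_within d (B (S j)) (B j)) -> (j <= m)%nat ->
  d (center (B j)) (center (B m)) <= radius (B j) - radius (B m).
Proof.
  intros Hnest Hjm. induction Hjm as [|m Hjm IH].
  - rewrite dist_refl. lra.
  - pose proof (Hnest m). unfold ball_within in *.
    pose proof (dist_triangle (center (B j)) (center (B m)) (center (B (S m)))). lra.
Qed.

Lemma limit_dist_le (u : nat -> T) (c x : T) (r : R) (N : nat) :
  converges_to d u x -> (forall m, (N <= m)%nat -> d c (u m) <= r) -> d c x <= r.
Proof.
  intros Hx Hu. apply Rnot_lt_le. intros Hlt.
  destruct (Hx (d c x - r)) as [N' HN']; [lra |].
  pose proof (HN' (Nat.max N N') ltac:(lia)). pose proof (Hu (Nat.max N N') ltac:(lia)).
  pose proof (dist_triangle c (u (Nat.max N N')) x). lra.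
Qed.

Lemma nested_balls_common_point (B : nat -> ball T) :
  complete_metric d -> (forall j, 0 < radius (B j)) ->
  (forall j, ball_within d (B (S j)) (B j)) ->
  (forall eps, 0 < eps -> exists j, radius (B j) < eps) ->
  exists x, forall j, in_ball d (B j) x.
Proof.
  intros Hc Hpos Hnest Hsmall.
  assert (Hdist : forall j m, (j <= m)%nat -> d (center (B j)) (center (B m)) <= radius (B j)).
  { intros j m Hjm. pose proof (nested_balls_center_dist B j m Hnest Hjm).
    pose proof (Hpos m). lra. }
  destruct (Hc (fun j => center (B j))) as [x Hx].
  { intros eps Heps. destruct (Hsmall (eps / 2)) as [J HJ]; [lra |].
    exists J. intros m k Hm' Hk.
    pose proof (Hdist J m Hm'). pose proof (Hdist J k Hk).
    pose proof (dist_triangle (center (B m)) (center (B J)) (center (B k))).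
    rewrite (dist_sym (center (B m)) (center (B J))) in *. lra. }
  exists x. intros j. unfold in_ball.
  assert (Hle : d (center (B (S j))) x <= radius (B (S j)))
    by (apply (limit_dist_le _ _ _ _ (S j) Hx); apply Hdist).
  pose proof (Hnest j). unfold ball_within in *.
  pose proof (dist_triangle (center (B j)) (center (B (S j))) x). lra.
Qed.

End MetricSpace.

Definition hits {T : Type} (f : T -> T) (U V : T -> Prop) (n : nat) : Prop :=
  exists x, U x /\ V (Nat.iter n f x).

Lemma iter_prod_map {T : Type} (f : T -> T) (n : nat) (p : T * T) :
  Nat.iter n (prod_map f) p = (Nat.iter n f (fst p), Nat.iter n f (snd p)).
Proof. induction n as [|n IH]; [destruct p; reflexivity | simpl; rewrite IH; reflexivity]. Qed.

Lemma open2_prod {T : Type} (d : T -> T -> R) (U V : T -> Prop) :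
  open_set d U -> open_set d V -> open2 d (fun p => U (fst p) /\ V (snd p)).
Proof.
  intros HU HV [x y] [Ux Vy].
  destruct (HU x Ux) as [e1 [He1 H1]]. destruct (HV y Vy) as [e2 [He2 H2]].
  exists (Rmin e1 e2). split; [apply Rmin_glb_lt; assumption |].
  intros q Hx Hy. pose proof (Rmin_l e1 e2). pose proof (Rmin_r e1 e2).
  split; [apply H1 | apply H2]; simpl in *; lra.
Qed.

Section WeakMixing.
Context {T : Type} (d : T -> T -> R) (f : T -> T)
  (Hf : metric_continuous d f) (Hw : weakly_mixing d f).

Lemma weakly_mixing_hits_pair U1 V1 U2 V2 :
  nonempty_open d U1 -> nonempty_open d V1 -> nonempty_open d U2 -> nonempty_open d V2 ->
  exists n, hits f U1 V1 n /\ hits f U2 V2 n.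
Proof.
  intros [oU1 [a1 Ha1]] [oV1 [b1 Hb1]] [oU2 [a2 Ha2]] [oV2 [b2 Hb2]].
  destruct (Hw (fun p => U1 (fst p) /\ U2 (snd p)) (fun p => V1 (fst p) /\ V2 (snd p)))
    as [n [_ [[x y] [[Ux Uy] HV]]]].
  - apply open2_prod; assumption.
  - apply open2_prod; assumption.
  - exists (a1, a2). split; assumption.
  - exists (b1, b2). split; assumption.
  - rewrite iter_prod_map in HV. destruct HV as [HV1 HV2].
    exists n. split; [exists x | exists y]; split; assumption.
Qed.

(* If f^k maps a point of U1 into U2 and a point of V1 into V2,
   take U = U1 ∩ f^-k U2 and V = V1 ∩ f^-k V2. *)
Lemma hits_meet U1 V1 U2 V2 :
  nonempty_open d U1 -> nonempty_open d V1 -> nonempty_open d U2 -> nonempty_open d V2 ->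
  exists U V, nonempty_open d U /\ nonempty_open d V /\
    forall n, hits f U V n -> hits f U1 V1 n /\ hits f U2 V2 n.
Proof.
  intros HU1 HV1 HU2 HV2.
  destruct (weakly_mixing_hits_pair U1 U2 V1 V2 HU1 HU2 HV1 HV2)
    as [k [[x [Ux Ux']] [y [Vy Vy']]]].
  exists (fun z => U1 z /\ U2 (Nat.iter k f z)), (fun z => V1 z /\ V2 (Nat.iter k f z)).
  split; [|split].
  - split; [| exists x; split; assumption].
    apply open_setI; [apply HU1 |].
    apply open_set_preimage; [apply metric_continuous_iter, Hf | apply HU2].
  - split; [| exists y; split; assumption].
    apply open_setI; [apply HV1 |].
    apply open_set_preimage; [apply metric_continuous_iter, Hf | apply HV2].
  - intros n [z [[Uz Uz'] [Vz Vz']]]. split; [exists z; split; assumption |].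
    exists (Nat.iter k f z). split; [assumption |].
    rewrite <- Nat.iter_add, Nat.add_comm, Nat.iter_add. exact Vz'.
Qed.

Lemma hits_meet_finite (M : nat) (U V : nat -> T -> Prop) :
  (forall i, (i <= M)%nat -> nonempty_open d (U i) /\ nonempty_open d (V i)) ->
  exists U' V', nonempty_open d U' /\ nonempty_open d V' /\
    forall n, hits f U' V' n -> forall i, (i <= M)%nat -> hits f (U i) (V i) n.
Proof.
  induction M as [|M IH]; intros HUV.
  - destruct (HUV 0%nat (le_n 0)) as [HU HV].
    exists (U 0%nat), (V 0%nat). split; [exact HU | split; [exact HV |]].
    intros n Hn i Hi. replace i with 0%nat by lia. exact Hn.
  - destruct IH as [U' [V' [HU' [HV' Hhits]]]]; [intros i Hi; apply HUV; lia |].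
    destruct (HUV (S M) (le_n _)) as [HU HV].
    destruct (hits_meet U' V' (U (S M)) (V (S M)) HU' HV' HU HV)
      as [U'' [V'' [HU'' [HV'' Hhits']]]].
    exists U'', V''. split; [exact HU'' | split; [exact HV'' |]].
    intros n Hn i Hi. destruct (Hhits' n Hn) as [Hn' HnM].
    destruct (Nat.eq_dec i (S M)) as [-> | Hne]; [exact HnM | apply Hhits; [exact Hn' | lia]].
Qed.

Lemma weakly_mixing_hits_finite (M : nat) (U V : nat -> T -> Prop) :
  (forall i, (i < M)%nat -> nonempty_open d (U i) /\ nonempty_open d (V i)) ->
  exists n, forall i, (i < M)%nat -> hits f (U i) (V i) n.
Proof.
  intros HUV. destruct M as [|M]; [exists 0%nat; intros; lia |].
  destruct (hits_meet_finite M U V) as [U' [V' [HU' [HV' Hhits]]]];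
    [intros i Hi; apply HUV; lia |].
  destruct (weakly_mixing_hits_pair U' V' U' V' HU' HV' HU' HV') as [n [Hn _]].
  exists n. intros i Hi. apply Hhits; [exact Hn | lia].
Qed.

End WeakMixing.

Record refinement (T : Type) : Type :=
  Refinement { children : nat -> ball T; contract_time : nat; expand_time : nat }.
Arguments Refinement {T}.
Arguments children {T}.
Arguments contract_time {T}.
Arguments expand_time {T}.

Definition is_refinement {T : Type} (d : T -> T -> R) (f : T -> T) (eps L : R) (M : nat)
    (A : nat -> ball T) (r : refinement T) : Prop :=
  (forall k, (k < M)%nat ->
     0 < radius (children r k) < eps /\ ball_within d (children r k) (A k)) /\
  (forall k k' y y', (k < M)%nat -> (k' < M)%nat ->
     in_ball d (children r k) y -> in_ball d (children r k') y' ->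
     d (Nat.iter (contract_time r) f y) (Nat.iter (contract_time r) f y') < eps) /\
  (forall k k' y y', (k < M)%nat -> (k' < M)%nat -> k <> k' ->
     in_ball d (children r k) y -> in_ball d (children r k') y' ->
     L < d (Nat.iter (expand_time r) f y) (Nat.iter (expand_time r) f y')).

Section Refinement.
Context {T : Type} (d : T -> T -> R) (f : T -> T) (Hm : is_metric d)
  (Hf : metric_continuous d f) (Hw : weakly_mixing d f) (Hd : infinite_diameter d).

(* Weak mixing first gives a time p sending a point of every ball A k near one point z;
   applied again to those open sets, it gives a time q sending them near points w k
   which are pairwise far apart. Small balls around the points found do the job. *)
Lemma refinement_exists (eps L : R) (M : nat) (A : nat -> ball T) :
  0 < eps -> (forall k, (k < M)%nat -> 0 < radius (A k)) ->
  exists r, is_refinement d f eps L M A r.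
Proof.
  intros Heps HA. destruct (Hd 0) as [z _].
  set (near_z := in_ball d (Ball z (eps / 2))).
  destruct (weakly_mixing_hits_finite d f Hf Hw M (fun k => in_ball d (A k)) (fun _ => near_z))
    as [p Hp].
  { intros k Hk. split; apply in_ball_nonempty_open; simpl; auto; lra. }
  set (A' := fun k y => in_ball d (A k) y /\ near_z (Nat.iter p f y)).
  assert (HA' : forall k, (k < M)%nat -> nonempty_open d (A' k)).
  { intros k Hk. split; [| exact (Hp k Hk)].
    apply open_setI; [apply in_ball_open; exact Hm |].
    apply open_set_preimage; [apply metric_continuous_iter, Hf | apply in_ball_open; exact Hm]. }
  destruct (far_points d Hm (L + 2) M Hd) as [w Hwfar].
  set (near_w := fun k => in_ball d (Ball (w k) 1)).
  destruct (weakly_mixing_hits_finite d f Hf Hw M A' near_w) as [q Hq].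
  { intros k Hk. split; [exact (HA' k Hk) | apply in_ball_nonempty_open; simpl; auto; lra]. }
  destruct (small_balls_within d M A
      (fun k y => near_z (Nat.iter p f y) /\ near_w k (Nat.iter q f y)) eps Heps) as [C HC].
  { intros k Hk. destruct (Hq k Hk) as [x [[Ax Ax'] Hx]]. split.
    - apply open_setI; apply open_set_preimage;
        solve [apply metric_continuous_iter, Hf | apply in_ball_open, Hm].
    - exists x. repeat split; assumption. }
  exists (Refinement C p q). split; [| split]; simpl.
  - intros k Hk. destruct (HC k Hk) as [Hr [Hwithin _]]. split; assumption.
  - intros k k' y y' Hk Hk' Hy Hy'.
    destruct (HC k Hk) as [_ [_ Hsub]]. destruct (Hsub y Hy) as [Hzy _].
    destruct (HC k' Hk') as [_ [_ Hsub']]. destruct (Hsub' y' Hy') as [Hzy' _].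
    replace eps with (eps / 2 + eps / 2) by lra. exact (dist_lt_via d Hm _ _ z _ _ Hzy Hzy').
  - intros k k' y y' Hk Hk' Hkk' Hy Hy'.
    destruct (HC k Hk) as [_ [_ Hsub]]. destruct (Hsub y Hy) as [_ Hwy].
    destruct (HC k' Hk') as [_ [_ Hsub']]. destruct (Hsub' y' Hy') as [_ Hwy'].
    pose proof (dist_lt_perturb d Hm _ _ (w k) (w k') 1 1 Hwy Hwy').
    pose proof (Hwfar k k' Hk Hk' Hkk'). lra.
Qed.

End Refinement.

Fixpoint stage_size (n : nat) : nat :=
  match n with 0 => 0 | S m => S (2 * stage_size m) end.

Fixpoint branch (k0 : nat) (g : nat -> nat -> bool) (j : nat) : nat :=
  match j with
  | 0 => k0
  | S j => 2 * branch k0 g j + (if g j (branch k0 g j) then 1 else 0)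
  end.

Lemma branch_lt n0 k0 g j :
  (k0 < stage_size n0)%nat -> (branch k0 g j < stage_size (n0 + j))%nat.
Proof.
  intros Hk0. induction j as [|j IH]; simpl.
  - rewrite Nat.add_0_r. exact Hk0.
  - rewrite Nat.add_succ_r. simpl. destruct (g j (branch k0 g j)); lia.
Qed.

Lemma branch_succ_div2 k0 g j : (branch k0 g (S j) / 2 = branch k0 g j)%nat.
Proof.
  cbn [branch]. rewrite Nat.add_comm.
  destruct (g j (branch k0 g j));
    [apply (Nat.add_b2n_double_div2 true) | apply (Nat.add_b2n_double_div2 false)].
Qed.

Section CantorScheme.
Context {T : Type} (d : T -> T -> R) (f : T -> T) (target : nat -> ball T).

(* Stage 0 is empty. Stage n+1 has two children of each of the [stage_size n] balls of
   stage n, the children of ball k having indices 2k and 2k+1, and one last ball inside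
   [target n]. *)
Definition parents (n : nat) (A : nat -> ball T) (k : nat) : ball T :=
  if (k <? 2 * stage_size n)%nat then A (k / 2)%nat else target n.

Definition refine_balls (n : nat) (A : nat -> ball T) : refinement T :=
  epsilon (inhabits (Refinement (fun _ => target 0%nat) 0 0))
    (is_refinement d f (/ (INR n + 1)) (INR n) (stage_size (S n)) (parents n A)).

Fixpoint stage (n : nat) : nat -> ball T :=
  match n with
  | 0 => fun _ => target 0%nat
  | S m => children (refine_balls m (stage m))
  end.

Definition contract_seq (n : nat) : nat := contract_time (refine_balls n (stage n)).
Definition expand_seq (n : nat) : nat := expand_time (refine_balls n (stage n)).

Definition scrambled_set (x : T) : Prop :=
  exists n0, forall n, (n0 <= n)%nat ->
    exists k, (k < stage_size n)%nat /\ in_ball d (stage n k) x.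

Hypothesis Hm : is_metric d.
Hypothesis Hc : complete_metric d.
Hypothesis Hf : metric_continuous d f.
Hypothesis Hw : weakly_mixing d f.
Hypothesis Hd : infinite_diameter d.
Hypothesis target_pos : forall n, 0 < radius (target n).

Lemma refine_balls_spec n A : (forall k, (k < stage_size n)%nat -> 0 < radius (A k)) ->
  is_refinement d f (/ (INR n + 1)) (INR n) (stage_size (S n)) (parents n A) (refine_balls n A).
Proof.
  intros HA. unfold refine_balls.
  apply epsilon_spec, refinement_exists; auto using inv_INR_succ_pos.
  intros k Hk. unfold parents. destruct (Nat.ltb_spec k (2 * stage_size n)); auto.
  apply HA, Nat.Div0.div_lt_upper_bound. lia.
Qed.

Lemma stage_radius_pos n k : (k < stage_size n)%nat -> 0 < radius (stage n k).
Proof.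
  revert k. induction n as [|n IH]; intros k Hk; [simpl in Hk; lia |].
  apply (proj1 (refine_balls_spec n (stage n) IH) k Hk).
Qed.

Lemma stage_spec n : is_refinement d f (/ (INR n + 1)) (INR n) (stage_size (S n))
  (parents n (stage n)) (refine_balls n (stage n)).
Proof. exact (refine_balls_spec n (stage n) (stage_radius_pos n)). Qed.

Lemma stage_radius_lt n k :
  (k < stage_size (S n))%nat -> radius (stage (S n) k) < / (INR n + 1).
Proof. intros Hk. apply (proj1 (stage_spec n) k Hk). Qed.

Lemma stage_within_parent n k :
  (k < 2 * stage_size n)%nat -> ball_within d (stage (S n) k) (stage n (k / 2)%nat).
Proof.
  intros Hk. destruct (proj1 (stage_spec n) k ltac:(simpl; lia)) as [_ Hwithin].
  unfold parents in Hwithin. rewrite (proj2 (Nat.ltb_lt _ _) Hk) in Hwithin. exact Hwithin.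
Qed.

Lemma stage_within_target n :
  ball_within d (stage (S n) (2 * stage_size n)%nat) (target n).
Proof.
  destruct (proj1 (stage_spec n) (2 * stage_size n)%nat ltac:(simpl; lia)) as [_ Hwithin].
  unfold parents in Hwithin. rewrite Nat.ltb_irrefl in Hwithin. exact Hwithin.
Qed.

Lemma stage_contract n k k' y y' :
  (k < stage_size (S n))%nat -> (k' < stage_size (S n))%nat ->
  in_ball d (stage (S n) k) y -> in_ball d (stage (S n) k') y' ->
  d (Nat.iter (contract_seq n) f y) (Nat.iter (contract_seq n) f y') < / (INR n + 1).
Proof. apply (proj1 (proj2 (stage_spec n))). Qed.

Lemma stage_expand n k k' y y' :
  (k < stage_size (S n))%nat -> (k' < stage_size (S n))%nat -> k <> k' ->
  in_ball d (stage (S n) k) y -> in_ball d (stage (S n) k') y' ->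
  INR n < d (Nat.iter (expand_seq n) f y) (Nat.iter (expand_seq n) f y').
Proof. apply (proj2 (proj2 (stage_spec n))). Qed.

Lemma stage_disjoint n k k' y :
  (k < stage_size (S n))%nat -> (k' < stage_size (S n))%nat -> k <> k' ->
  in_ball d (stage (S n) k) y -> ~ in_ball d (stage (S n) k') y.
Proof.
  intros Hk Hk' Hkk' Hy Hy'. pose proof (stage_expand n k k' y y Hk Hk' Hkk' Hy Hy').
  rewrite (dist_refl d Hm) in H. pose proof (pos_INR n). lra.
Qed.

Lemma branch_point n0 k0 g : (k0 < stage_size n0)%nat ->
  exists x, scrambled_set x /\ forall j, in_ball d (stage (n0 + j) (branch k0 g j)) x.
Proof.
  intros Hk0.
  destruct (nested_balls_common_point d Hm (fun j => stage (n0 + j) (branch k0 g j)) Hc)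
    as [x Hx].
  - intros j. apply stage_radius_pos, branch_lt, Hk0.
  - intros j. rewrite Nat.add_succ_r, <- (branch_succ_div2 k0 g j) at 1.
    apply stage_within_parent.
    pose proof (branch_lt n0 k0 g j Hk0). simpl. destruct (g j (branch k0 g j)); lia.
  - intros eps Heps. destruct (inv_INR_succ_lt_eventually eps Heps) as [N HN].
    exists (S N). rewrite Nat.add_succ_r. eapply Rlt_trans; [| apply (HN (n0 + N)%nat); lia].
    apply stage_radius_lt. rewrite <- Nat.add_succ_r. apply branch_lt, Hk0.
  - exists x. split; [| exact Hx].
    exists n0. intros n Hn. destruct (Nat.le_exists_sub n0 n Hn) as [j [-> _]].
    rewrite Nat.add_comm. exists (branch k0 g j). split; [apply branch_lt, Hk0 | apply Hx].
Qed.

Lemma scrambled_set_dense :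
  (forall x eps, 0 < eps -> exists n, forall y, in_ball d (target n) y -> d x y < eps) ->
  dense_set d scrambled_set.
Proof.
  intros Htarget x eps Heps. destruct (Htarget x eps Heps) as [n Hn].
  destruct (branch_point (S n) (2 * stage_size n) (fun _ _ => false)) as [y [Sy Hy]];
    [simpl; lia |].
  exists y. split; [exact Sy |]. apply Hn.
  apply (in_ball_within d Hm _ _ _ (stage_within_target n)).
  specialize (Hy 0%nat). rewrite Nat.add_0_r in Hy. exact Hy.
Qed.

(* Cantor's diagonal argument: at step m the branch avoids the child ball containing u m. *)
Lemma scrambled_point_avoiding (u : nat -> T) :
  exists x, scrambled_set x /\ forall m, x <> u m.
Proof.
  set (g := fun m k => if excluded_middle_informative
                            (in_ball d (stage (S (S m)) (2 * k)%nat) (u m)) then true else false).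
  destruct (branch_point 1 0 g) as [x [Sx Hx]]; [simpl; lia |].
  exists x. split; [exact Sx |]. intros m ->.
  specialize (Hx (S m)). pose proof (branch_lt 1 0 g m ltac:(simpl; lia)) as Hk.
  simpl in Hx, Hk. set (k := branch 0 g m) in *.
  unfold g in Hx. destruct (excluded_middle_informative _) as [Hu | Hu].
  - apply (stage_disjoint (S m) (2 * k) (2 * k + 1) (u m)); simpl; try lia; assumption.
  - rewrite Nat.add_0_r in Hx. exact (Hu Hx).
Qed.

Lemma scrambled_set_uncountable : ~ countable_set scrambled_set.
Proof.
  intros [e He].
  set (u := fun m => match e m with Some y => y | None => center (target 0%nat) end).
  destruct (scrambled_point_avoiding u) as [x [Sx Hx]].
  destruct (He x Sx) as [m Hm'].
  apply (Hx m). unfold u. rewrite Hm'. reflexivity.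
Qed.

Lemma scrambled_set_two_points : exists x y, scrambled_set x /\ scrambled_set y /\ x <> y.
Proof.
  destruct (scrambled_point_avoiding (fun _ => center (target 0%nat))) as [x [Sx _]].
  destruct (scrambled_point_avoiding (fun _ => x)) as [y [Sy Hy]].
  exists x, y. split; [exact Sx | split; [exact Sy |]]. intros ->. exact (Hy 0%nat eq_refl).
Qed.

Lemma scrambled_set_contract x y : scrambled_set x -> scrambled_set y ->
  forall eps, 0 < eps -> exists N, forall n, (N <= n)%nat ->
    d (Nat.iter (contract_seq n) f x) (Nat.iter (contract_seq n) f y) < eps.
Proof.
  intros [nx Hx] [ny Hy] eps Heps. destruct (inv_INR_succ_lt_eventually eps Heps) as [N HN].
  exists (Nat.max N (Nat.max nx ny)). intros n Hn.
  destruct (Hx (S n) ltac:(lia)) as [k [Hk Hxk]].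
  destruct (Hy (S n) ltac:(lia)) as [k' [Hk' Hyk']].
  eapply Rlt_trans; [apply (stage_contract n k k'); assumption | apply HN; lia].
Qed.

Lemma scrambled_set_expand x y : scrambled_set x -> scrambled_set y -> x <> y ->
  forall L, exists N, forall n, (N <= n)%nat ->
    L < d (Nat.iter (expand_seq n) f x) (Nat.iter (expand_seq n) f y).
Proof.
  intros [nx Hx] [ny Hy] Hxy L.
  pose proof (dist_gt0 d Hm x y Hxy) as Hdxy.
  destruct (inv_INR_succ_lt_eventually (d x y / 2)) as [N1 HN1]; [lra |].
  destruct (INR_archimed 1 L) as [N2 HN2]; [lra |].
  exists (Nat.max (Nat.max N1 N2) (Nat.max nx ny)). intros n Hn.
  destruct (Hx (S n) ltac:(lia)) as [k [Hk Hxk]].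
  destruct (Hy (S n) ltac:(lia)) as [k' [Hk' Hyk']].
  assert (INR N2 <= INR n) by (apply le_INR; lia).
  destruct (Nat.eq_dec k k') as [<- | Hkk'].
  - exfalso. pose proof (stage_radius_lt n k Hk). pose proof (HN1 n ltac:(lia)).
    pose proof (dist_lt_via d Hm x y _ _ _ Hxk Hyk'). lra.
  - pose proof (stage_expand n k k' x y Hk Hk' Hkk' Hxk Hyk'). lra.
Qed.

Lemma scrambled_set_LY : uniformly_LY_scrambled d f scrambled_set.
Proof.
  split; [exact scrambled_set_two_points |].
  exists contract_seq, expand_seq. intros x y Sx Sy Hxy.
  split; [apply scrambled_set_contract | apply scrambled_set_expand]; assumption.
Qed.

End CantorScheme.

Lemma separable_dense_balls {T : Type} (d : T -> T -> R) :
  is_metric d -> separable_metric d -> inhabited T ->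
  exists target : nat -> ball T, (forall n, 0 < radius (target n)) /\
    forall x eps, 0 < eps -> exists n, forall y, in_ball d (target n) y -> d x y < eps.
Proof.
  intros Hm [D [[e He] HD]] [x0].
  exists (fun n => let (a, b) := Cantor.of_nat n in
            Ball (match e a with Some s => s | None => x0 end) (/ (INR b + 1))).
  split.
  - intros n. destruct (Cantor.of_nat n). apply inv_INR_succ_pos.
  - intros x eps Heps. destruct (HD x (eps / 2)) as [s [Ds Hs]]; [lra |].
    destruct (He s Ds) as [a Ha].
    destruct (inv_INR_succ_lt_eventually (eps / 2)) as [b Hb]; [lra |].
    exists (Cantor.to_nat (a, b)). rewrite Cantor.cancel_of_to, Ha.
    intros y Hy. unfold in_ball in Hy; simpl in Hy.
    pose proof (Hb b (le_n b)). pose proof (dist_triangle d Hm x s y). lra.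
Qed.

Theorem proposition2p7 (T : Type) (d : T -> T -> R) (f : T -> T) :
  is_metric d -> complete_metric d -> separable_metric d ->
  metric_continuous d f ->
  infinite_diameter d -> weakly_mixing d f ->
  densely_uniformly_LY_chaotic d f.
Proof.
  intros Hm Hc Hsep Hf Hd Hw.
  destruct (Hd 0) as [x0 _].
  destruct (separable_dense_balls d Hm Hsep (inhabits x0)) as [target [Hpos Hdense]].
  exists (scrambled_set d f target). split; [| split].
  - apply scrambled_set_dense; assumption.
  - apply scrambled_set_uncountable; assumption.
  - apply scrambled_set_LY; assumption.
Qed.
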